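(* Let $p\ge5$ and consider the white metallic tree $\mathcal W_\pi$ under the penultimate assignment. Let $\nu$ be any node, let $u$ be its metallic code and let $w$ be the metallic code of $\nu-1$ (the empty word if $\nu=1$). Then: (i) if $\nu$ is black, the signature of $\nu$ is $0$, and its $p-3$ sons, in increasing order, have metallic codes $w\,(h+1)$ for $h=1,\dots,p-5$ (the code $w$ followed by the digit $h+1$), then $u\,0$, then $u\,1$; (ii) if $\nu$ is white, the signature of $\nu$ is nonzero, and its $p-2$ sons, in increasing order, have metallic codes $w\,(h+1)$ for $h=1,\dots,p-4$, then $u\,0$, then $u\,1$. In particular, in both cases the black son $u\,0$ has signature $0$ and the sons other than $u0,u1$ have signatures $2,3,\dots$ in increasing order.
   Context: Fix $p\ge5$. Metallic numbers: $m_{-1}=0$, $m_0=1$, $m_{n+2}=(p-2)m_{n+1}-m_n$. With $d=p-3$, $c=p-4$, the metallic code of a positive integer $n$ is the unique word $a_k\cdots a_0$ over $\{0,\dots,p-3\}$ with $a_k\ne0$, $n=\sum a_im_i$, containing no factor $d\,c^j\,d$ ($j\ge0$); the code of $0$ is the empty word; the signature of $n$ is its last digit $a_0$; $w\,e$ denotes the word $w$ followed by the digit $e$. White metallic tree under an assignment $\alpha$, $\mathcal W_\alpha$: its nodes are the positive integers, each black or white; the root $1$ is white; nodes are processed in increasing order, and node $\nu$ receives $p-2$ sons if white and $p-3$ sons if black, these sons being the smallest integers not yet used, in increasing order; the assignment specifies for each node the position (among its sons, the leftmost having position $1$) of its unique black son, all other sons being white. The penultimate assignment $\pi$ puts the black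 son at the penultimate position (position $p-3$ for a white node, $p-4$ for a black node). *)

From mathcomp Require Import all_boot.
Set Implicit Arguments. Unset Strict Implicit. Unset Printing Implicit Defensive.

(* Metallic numbers: metal p i = m_i for i >= 0 (m_{-1} = 0, m_0 = 1,
   m_{n+2} = (p-2) m_{n+1} - m_n; hence m_1 = p-2).  For p >= 5 the sequence
   is increasing, so truncated nat subtraction is exact. *)
Fixpoint metal (p i : nat) : nat :=
  match i with
  | 0 => 1
  | 1 => p - 2
  | (i'.+1 as j).+1 => (p - 2) * metal p j - metal p i'
  end.

(* Words are written most significant digit first: [:: a_k; ...; a_0]. *)
Definition mvalue (p : nat) (w : seq nat) : nat :=
  \sum_(i < size w) nth 0 (rev w) i * metal p i.

(* w contains a factor d c^j d with d = p-3, c = p-4 *)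
Definition has_forbidden (p : nat) (w : seq nat) : Prop :=
  exists j, infix ((p - 3) :: nseq j (p - 4) ++ [:: p - 3]) w.

Definition is_mcode (p n : nat) (w : seq nat) : Prop :=
  [/\ all (fun a => a <= p - 3) w,
      (w == [::]) || (head 0 w != 0),
      mvalue p w = n
    & ~ has_forbidden p w].

Definition signature (w : seq nat) : nat := last 0 w.

(* Colours: true = black, false = white.  Node numbers are 1-based;
   the list [build p k] holds the colours of nodes 1,2,... assigned after
   nodes 1..k have been processed. *)
Definition nb_sons (p : nat) (black : bool) : nat :=
  if black then p - 3 else p - 2.

Definition sons_colors (p : nat) (black : bool) : seq bool :=
  [seq (i == (nb_sons p black) - 2) | i <- iota 0 (nb_sons p black)].

Fixpoint build (p k : nat) : seq bool :=
  match k with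
  | 0 => [:: false]
  | k'.+1 => let s := build p k' in s ++ sons_colors p (nth false s k')
  end.

Definition is_black (p nu : nat) : bool := nth false (build p nu) nu.-1.

Definition first_son (p nu : nat) : nat := (size (build p nu.-1)).+1.

(* the son of nu at position i (leftmost position is 1) *)
Definition son (p nu i : nat) : nat := first_son p nu + i.-1.

Definition nsons (p nu : nat) : nat := nb_sons p (is_black p nu).

From mathcomp Require Import all_boot zify.

(* Codes are unique: an admissible word of length k is worth less than m_k,
   which forces first its length and then, greedily, its digits.  So it is
   enough to build one code per node, by strong induction along the tree.
   Each processed node has exactly one black son, so once nodes 1..m are
   processed the tree has (p-2)m + 1 - B(m) nodes, B(m) being the number of
   black nodes among 1..m.  For w the code of m and u the code of m+1, the
   invariant val(w 0) + B(m) = (p-2)m and the recurrence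
   val(x a 0) + val(x) = (p-2) val(x a) show that the successive sons of m+1
   are worth w (i+1) for i <= k-2, then u 0 and u 1, k being their number.
   Along the way one keeps track of two facts: the last digit of a code is 0
   exactly at black nodes, and a code ending with d c^j is followed by a black
   node; the latter is what keeps d c^j d out of the new codes. *)

Set Implicit Arguments.
Unset Strict Implicit.

Lemma metalSS p k : metal p k.+2 = (p - 2) * metal p k.+1 - metal p k.
Proof. by []. Qed.

Section MetallicWords.

Variable p : nat.
Hypothesis p_ge4 : 4 <= p.

Lemma metal_leS k : metal p k <= metal p k.+1.
Proof.
elim: k => [|k IH]; first by rewrite /=; lia.
have : 2 * metal p k.+1 <= (p - 2) * metal p k.+1 by apply: leq_mul; lia.
rewrite metalSS; lia.
Qed.

Lemma metal_rec k : metal p k.+2 + metal p k = (p - 2) * metal p k.+1.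
Proof.
have : 2 * metal p k.+1 <= (p - 2) * metal p k.+1 by apply: leq_mul; lia.
have := metal_leS k; rewrite metalSS; lia.
Qed.

Lemma metal_mono : {homo metal p : i j / i <= j}.
Proof. by apply: homo_leq => // [j i k|k]; [apply: leq_trans | apply: metal_leS]. Qed.

Fixpoint lvalue (i : nat) (r : seq nat) : nat :=
  if r is a :: r' then a * metal p i + lvalue i.+1 r' else 0.

Lemma lvalue_sum i r : \sum_(k < size r) nth 0 r k * metal p (k + i) = lvalue i r.
Proof.
elim: r i => [|a r IH] i; first by rewrite big_ord0.
rewrite big_ord_recl /= -IH; congr (_ + _).
by apply: eq_bigr => k _; rewrite /= addnS.
Qed.

Lemma mvalueE w : mvalue p w = lvalue 0 (rev w).
Proof. by rewrite /mvalue -lvalue_sum size_rev; apply: eq_bigr => k _; rewrite addn0. Qed.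

Lemma lvalue_rcons i r a : lvalue i (rcons r a) = lvalue i r + a * metal p (i + size r).
Proof. by elim: r i => [|b r IH] i /=; rewrite ?addn0 // IH addnA addnS. Qed.

Lemma lvalue_rec i r : lvalue i.+2 r + lvalue i r = (p - 2) * lvalue i.+1 r.
Proof.
elim: r i => [|a r IH] i /=; first by rewrite muln0.
rewrite mulnDr mulnCA -metal_rec -IH; lia.
Qed.

Lemma mvalue_nil : mvalue p [::] = 0.
Proof. by rewrite /mvalue big_ord0. Qed.

Lemma mvalue_cons a w : mvalue p (a :: w) = a * metal p (size w) + mvalue p w.
Proof. by rewrite !mvalueE rev_cons lvalue_rcons size_rev addnC. Qed.

Lemma mvalue_rcons w a : mvalue p (rcons w a) = mvalue p (rcons w 0) + a.
Proof. by rewrite !mvalueE !rev_rcons /= mul0n muln1 add0n addnC. Qed.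

Lemma mvalue_rcons0_rec w a :
  mvalue p (rcons (rcons w a) 0) + mvalue p w = (p - 2) * mvalue p (rcons w a).
Proof.
rewrite !mvalueE !rev_rcons /= !mul0n !add0n muln1 mulnDr -lvalue_rec; lia.
Qed.

Lemma mvalue_nseqS k a : mvalue p (nseq k.+1 a) = a * metal p k + mvalue p (nseq k a).
Proof. by have := mvalue_cons a (nseq k a); rewrite size_nseq. Qed.

(* d c^k is the largest admissible word of length k+1. *)
Lemma metalS_max_word k : metal p k.+1 = (mvalue p ((p - 3) :: nseq k (p - 4))).+1.
Proof.
elim: k => [|k IH]; first by rewrite mvalue_cons mvalue_nil /=; lia.
rewrite mvalue_cons size_nseq in IH.
rewrite metalSS mvalue_cons size_nseq mvalue_nseqS.
nia.
Qed.

Definition admissible (w : seq nat) : Prop :=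
  all (fun a => a <= p - 3) w /\ ~ has_forbidden p w.

Definition starts_cd (w : seq nat) : Prop :=
  exists j, prefix (nseq j (p - 4) ++ [:: p - 3]) w.

Lemma admissible_behead a w : admissible (a :: w) -> admissible w.
Proof.
move=> [/andP [_ hw] hf]; split => // [[j hj]]; apply: hf.
by exists j; rewrite /= hj orbT.
Qed.

(* The second bound is needed for the induction: after a leading d the rest
   of an admissible word cannot start with c^j d. *)
Lemma mvalue_admissible_bounds w : admissible w ->
  mvalue p w < metal p (size w) /\ (~ starts_cd w -> mvalue p w <= mvalue p (nseq (size w) (p - 4))).
Proof.
elim: w => [|a w IH] adm_aw; first by rewrite mvalue_nil.
have [lt_w le_w] := IH (admissible_behead adm_aw).
have [/andP [ha _] hf] := adm_aw.
have := metalS_max_word (size w).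
rewrite mvalue_cons size_nseq => m_w.
rewrite [size (a :: w)]/= mvalue_nseqS m_w mvalue_cons.
split.
- have [a_lt|a_eq] : a < p - 3 \/ a = p - 3 by lia.
  + have : a.+1 * metal p (size w) <= (p - 3) * metal p (size w) by apply: leq_mul.
    lia.
  + have : ~ starts_cd w by move=> [j hj]; apply: hf; exists j; rewrite /= a_eq eqxx hj.
    move/le_w; rewrite a_eq; lia.
- move=> hs.
  have [a_lt|a_eq] : a < p - 4 \/ a = p - 4.
    have : a != p - 3 by apply/eqP => e; apply: hs; exists 0; rewrite e /= eqxx; case: (w).
    lia.
  + have : a.+1 * metal p (size w) <= (p - 4) * metal p (size w) by apply: leq_mul.
    lia.
  + have : ~ starts_cd w by move=> [j hj]; apply: hs; exists j.+1; rewrite /= a_eq eqxx hj.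
    move/le_w; rewrite a_eq; lia.
Qed.

Lemma admissible_mvalue_inj w1 w2 : size w1 = size w2 ->
  admissible w1 -> admissible w2 -> mvalue p w1 = mvalue p w2 -> w1 = w2.
Proof.
elim: w1 w2 => [|a w1 IH] [|b w2] //= [eq_size] adm1 adm2.
rewrite !mvalue_cons -eq_size => eq_val.
have [lt1 _] := mvalue_admissible_bounds (admissible_behead adm1).
have [lt2 _] := mvalue_admissible_bounds (admissible_behead adm2).
rewrite -eq_size in lt2.
have eq_ab : a = b.
  case: (ltngtP a b) => [lt_ab|lt_ba|//].
  + have : a.+1 * metal p (size w1) <= b * metal p (size w1) by apply: leq_mul.
    lia.
  + have : b.+1 * metal p (size w1) <= a * metal p (size w1) by apply: leq_mul.
    lia.
rewrite eq_ab in eq_val *; congr (_ :: _).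
apply: (IH _ eq_size (admissible_behead adm1) (admissible_behead adm2)); lia.
Qed.

Lemma mcode_admissible n w : is_mcode p n w -> admissible w.
Proof. by case. Qed.

Lemma mcode_metal_bounds n w : is_mcode p n w ->
  n < metal p (size w) /\ (w != [::] -> metal p (size w).-1 <= n).
Proof.
move=> code_w; have [lt_w _] := mvalue_admissible_bounds (mcode_admissible code_w).
case: code_w => _ head_w <- _; split => //.
case: w head_w {lt_w} => [|a w] //=; rewrite -lt0n => a_gt0 _.
rewrite mvalue_cons.
have : 1 * metal p (size w) <= a * metal p (size w) by apply: leq_mul.
lia.
Qed.

Lemma mcode_size_le n w1 w2 : is_mcode p n w1 -> is_mcode p n w2 -> size w2 <= size w1.
Proof.
move=> /mcode_metal_bounds [lt_w1 _] /mcode_metal_bounds [_ ge_w2].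
rewrite leqNgt; apply/negP => lt_w.
have : metal p (size w1) <= metal p (size w2).-1 by apply: metal_mono; lia.
by case: w2 ge_w2 lt_w => // a w2 /(_ isT); lia.
Qed.

Lemma mcode_uniq n w1 w2 : is_mcode p n w1 -> is_mcode p n w2 -> w1 = w2.
Proof.
move=> code1 code2; apply: admissible_mvalue_inj.
- by apply/eqP; rewrite eqn_leq (mcode_size_le code1 code2) (mcode_size_le code2 code1).
- exact: mcode_admissible code1.
- exact: mcode_admissible code2.
- by case: code1 => _ _ ->; case: code2 => _ _ ->.
Qed.

Definition ends_dc (w : seq nat) : Prop := starts_cd (rev w).

Lemma ends_dc_rcons w a : ends_dc (rcons w a) -> a = p - 3 \/ (a = p - 4 /\ ends_dc w).
Proof.
rewrite /ends_dc rev_rcons => [[[|j] /= /andP [/eqP <- pre_w]]]; first by left.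
by right; split => //; exists j.
Qed.

Lemma has_forbidden_rcons w a : has_forbidden p (rcons w a) ->
  has_forbidden p w \/ (a = p - 3 /\ ends_dc w).
Proof.
have rev_dcd j : rev ((p - 3) :: nseq j (p - 4) ++ [:: p - 3]) = (p - 3) :: nseq j (p - 4) ++ [:: p - 3].
  by rewrite rev_cons rev_cat rev_nseq /= -cats1.
move=> [j]; rewrite -infix_rev rev_rcons rev_dcd /= => /orP [/andP [/eqP <- pre_w]|inf_w].
- by right; split => //; exists j.
- by left; exists j; rewrite -infix_rev rev_dcd.
Qed.

Lemma mcode_rcons n w a : is_mcode p n w -> a <= p - 3 -> (w = [::] -> 0 < a) ->
  (a = p - 3 -> ~ ends_dc w) -> is_mcode p (mvalue p (rcons w a)) (rcons w a).
Proof.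
move=> [digits_w head_w _ forb_w] le_a a_gt0 a_not_dc; split => //.
- by rewrite all_rcons le_a.
- case: w {digits_w forb_w a_not_dc} head_w a_gt0 => [_ /(_ erefl)|b w] //=.
  by rewrite lt0n.
- by move/has_forbidden_rcons => [//|[/a_not_dc]].
Qed.

End MetallicWords.

Section MetallicTree.

Variable p : nat.
Hypothesis p_ge5 : 5 <= p.
Let p_ge4 : 4 <= p := ltnW p_ge5.

Lemma nb_sons_ge2 b : 2 <= nb_sons p b.
Proof. by case: b => /=; lia. Qed.

Lemma nsons_ge2 n : 2 <= nsons p n.
Proof. exact: nb_sons_ge2. Qed.

Lemma size_sons_colors b : size (sons_colors p b) = nb_sons p b.
Proof. by rewrite size_map size_iota. Qed.

Lemma count_sons_colors b : count id (sons_colors p b) = 1.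
Proof.
rewrite count_map (@eq_count _ _ (pred1 (nb_sons p b - 2))) // count_uniq_mem ?iota_uniq //.
by rewrite mem_iota; have := nb_sons_ge2 b; lia.
Qed.

Lemma build_prefix k k' : k <= k' -> exists r, build p k' = build p k ++ r.
Proof.
elim: k' => [|k' IH]; first by rewrite leqn0 => /eqP ->; exists [::]; rewrite cats0.
rewrite leq_eqVlt => /orP [/eqP ->|/IH [r build_k']]; first by exists [::]; rewrite cats0.
by exists (r ++ sons_colors p (nth false (build p k') k')); rewrite /= build_k' catA.
Qed.

Lemma size_build_gt k : k < size (build p k).
Proof.
elim: k => [|k IH] //=.
by rewrite size_cat size_sons_colors; have := nb_sons_ge2 (nth false (build p k) k); lia.
Qed.

Lemma count_build k : count id (build p k) = k.
Proof. by elim: k => [|k IH] //=; rewrite count_cat IH count_sons_colors addn1. Qed.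

Lemma nth_build_le k k' j : j < size (build p k) -> k <= k' ->
  nth false (build p k') j = nth false (build p k) j.
Proof. by move=> lt_j /build_prefix [r ->]; rewrite nth_cat lt_j. Qed.

Lemma is_blackS k : is_black p k.+1 = nth false (build p k) k.
Proof. exact: nth_build_le (size_build_gt k) (leqnSn k). Qed.

Lemma size_buildS k : size (build p k.+1) = size (build p k) + nsons p k.+1.
Proof. by rewrite /= size_cat size_sons_colors /nsons is_blackS. Qed.

Lemma son_index m h : 1 <= h -> son p m.+1 h = size (build p m) + h.
Proof. by rewrite /son /first_son /=; lia. Qed.

Lemma exists_parent n : 2 <= n ->
  exists m i, 1 <= i <= nsons p m.+1 /\ n = son p m.+1 i.
Proof.
move=> n_ge2.
suff parent_below k : n <= size (build p k) ->
    exists m i, 1 <= i <= nsons p m.+1 /\ n = son p m.+1 i.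
  by apply: (parent_below n); have := size_build_gt n; lia.
elim: k => [|k IH] le_n; first by move: le_n => /=; lia.
case: (leqP n (size (build p k))) => [/IH //|lt_n].
exists k, (n - size (build p k)); rewrite son_index; last lia.
by move: le_n; rewrite size_buildS; lia.
Qed.

(* Entry j of [build p n] is the colour of node j + 1, so this counts the
   black nodes among 1, ..., n. *)
Definition nblack (n : nat) : nat := count id (take n (build p n)).

Lemma nblackS n : nblack n.+1 = nblack n + is_black p n.+1.
Proof.
have [r build_n] := build_prefix (leqnSn n).
rewrite /nblack build_n takel_cat ?(take_nth false) ?size_build_gt //.
by rewrite -cats1 count_cat /= addn0 is_blackS.
Qed.

Lemma nblack_size_build m : nblack (size (build p m)) = m.
Proof.
have [r build_m] := build_prefix (ltnW (size_build_gt m)).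
by rewrite /nblack build_m take_size_cat // count_build.
Qed.

(* Every processed node has exactly one black son, and the root is white. *)
Lemma size_build_nblack m : (size (build p m)).+1 + nblack m = (p - 2) * m + 2.
Proof.
elim: m => [|m IH]; first by rewrite /nblack /= muln0.
rewrite size_buildS nblackS /nsons.
by case: (is_black p m.+1) IH => /=; rewrite mulnS; lia.
Qed.

Lemma is_black_son m i : 1 <= i <= nsons p m.+1 ->
  is_black p (size (build p m) + i) = (i == nsons p m.+1 - 1).
Proof.
move=> /andP [i_ge1 i_le].
have m_lt := size_build_gt m; have size_mS := size_buildS m; have k_ge2 := nsons_ge2 m.+1.
rewrite /is_black (@nth_build_le m.+1); [|lia|lia].
rewrite /= nth_cat ifN; last lia.
have -> : (size (build p m) + i).-1 - size (build p m) = i.-1 by lia.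
by rewrite -is_blackS /sons_colors -/(nsons p m.+1) (nth_map 0) ?size_iota ?nth_iota;
  [apply/eqP/eqP|..]; lia.
Qed.

Lemma nblack_son m i : i <= nsons p m.+1 ->
  nblack (size (build p m) + i) = m + (nsons p m.+1 - 1 <= i).
Proof.
have k_ge2 := nsons_ge2 m.+1.
elim: i => [|i IH] le_i; first by rewrite addn0 nblack_size_build; case: leqP; lia.
rewrite addnS nblackS IH ?(ltnW le_i) // -addnS is_black_son; last lia.
by case: ltngtP => h; case: leqP; case: leqP; lia.
Qed.

(* The last component keeps the digit d out of the sons of n + 1 when w ends
   with d c^j: n + 1 is then black and has only p - 3 sons. *)
Definition code_inv (n : nat) (w : seq nat) : Prop :=
  [/\ mvalue p (rcons w 0) + nblack n = (p - 2) * n,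
      0 < n -> (signature w == 0) = is_black p n
    & ends_dc p w -> is_black p n.+1].

Lemma nsonsE n : nsons p n = if is_black p n then p - 3 else p - 2.
Proof. by []. Qed.

Lemma code_inv_mvalue n w : code_inv n w -> mvalue p (rcons w 0) = (size (build p n)).-1.
Proof. by case=> val_w _ _; have := size_build_nblack n; lia. Qed.

Lemma mcode_inv_son_low m w i : is_mcode p m w -> code_inv m w -> 1 <= i <= nsons p m.+1 - 2 ->
  is_mcode p (size (build p m) + i) (rcons w i.+1) /\
  code_inv (size (build p m) + i) (rcons w i.+1).
Proof.
move=> code_w [val_w _ dc_w] /andP [i_ge1 i_le].
have [_ _ val_m _] := code_w.
have size_m := size_build_nblack m; have k_eq := nsonsE m.+1.
have black_dc : ends_dc p w -> i <= p - 5.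
  by move/dc_w => black_m; move: i_le; rewrite nsonsE black_m; lia.
have val_wi : mvalue p (rcons w i.+1) = size (build p m) + i by rewrite mvalue_rcons; lia.
split.
  rewrite -val_wi; apply: (mcode_rcons code_w) => // [|a_eq /black_dc]; last lia.
  by case: ifP k_eq => _; lia.
split.
- have := mvalue_rcons0_rec p_ge4 w i.+1; rewrite val_wi nblack_son; last lia.
  by case: leqP; lia.
- by rewrite /signature last_rcons is_black_son //; [case: eqP; lia | lia].
- move/ends_dc_rcons => dc_wi; rewrite -addnS is_black_son; last lia.
  apply/eqP; move: k_eq; case: dc_wi => [|[a_eq /dc_w ->]]; [case: ifP => _|]; lia.
Qed.

Lemma mcode_inv_son_black m u : is_mcode p m.+1 u -> code_inv m.+1 u ->
  is_mcode p (size (build p m) + (nsons p m.+1 - 1)) (rcons u 0) /\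
  code_inv (size (build p m) + (nsons p m.+1 - 1)) (rcons u 0).
Proof.
move=> code_u inv_u; have [_ _ val_u _] := code_u.
have k_ge2 := nsons_ge2 m.+1.
have val_u0 : mvalue p (rcons u 0) = size (build p m) + (nsons p m.+1 - 1).
  by rewrite (code_inv_mvalue inv_u) size_buildS; lia.
split.
  rewrite -val_u0; apply: (mcode_rcons code_u) => // [u_nil|p_eq0 _]; last lia.
  by move: val_u; rewrite u_nil mvalue_nil.
split.
- have := mvalue_rcons0_rec p_ge4 u 0; rewrite val_u0 nblack_son //; case: leqP; lia.
- by rewrite /signature last_rcons is_black_son ?eqxx //; lia.
- by move/ends_dc_rcons; lia.
Qed.

Lemma mcode_inv_son_last m u : is_mcode p m.+1 u -> code_inv m.+1 u ->
  is_mcode p (size (build p m) + nsons p m.+1) (rcons u 1) /\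
  code_inv (size (build p m) + nsons p m.+1) (rcons u 1).
Proof.
move=> code_u inv_u; have [_ _ val_u _] := code_u; have [_ _ dc_u] := inv_u.
have k_ge2 := nsons_ge2 m.+1.
have val_u1 : mvalue p (rcons u 1) = size (build p m) + nsons p m.+1.
  by rewrite mvalue_rcons (code_inv_mvalue inv_u) size_buildS; lia.
split; first by rewrite -val_u1; apply: (mcode_rcons code_u) => // [|p_eq3 _]; lia.
split.
- have := mvalue_rcons0_rec p_ge4 u 1; rewrite val_u1 nblack_son //; case: leqP; lia.
- by rewrite /signature last_rcons is_black_son //; [case: eqP; lia | lia].
- move/ends_dc_rcons => [|[p_eq5 /dc_u black_mS]]; first lia.
  rewrite -size_buildS -[_.+1]addn1 is_black_son; last by have := nsons_ge2 m.+2; lia.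
  by rewrite nsonsE black_mS; apply/eqP; lia.
Qed.

Lemma mcode_inv0 : is_mcode p 0 [::] /\ code_inv 0 [::].
Proof.
split; split=> //.
- by rewrite mvalue_nil.
- by move=> [j /size_infix]; rewrite /= size_cat.
- by rewrite mvalueE /nblack /= muln0.
- by move=> [j /size_prefix]; rewrite size_cat addn1.
Qed.

Lemma mcode_inv1 : is_mcode p 1 [:: 1] /\ code_inv 1 [:: 1].
Proof.
split; split=> //; rewrite ?mvalueE /= ?muln1 //.
- by rewrite andbT; lia.
- by move=> [j /size_infix]; rewrite /= size_cat size_nseq /=; lia.
- by rewrite /nblack /= take0 /=; lia.
- move=> [[|j] /[dup] /size_prefix]; first by rewrite /= andbT => _ /eqP; lia.
  by rewrite /= size_cat size_nseq /=; lia.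
Qed.

Lemma exists_mcode_inv n : exists w, is_mcode p n w /\ code_inv n w.
Proof.
elim/ltn_ind: n => -[|[|n]] IH.
- by exists [::]; exact: mcode_inv0.
- by exists [:: 1]; exact: mcode_inv1.
have [m [i [/andP [i_ge1 i_le] n_eq]]] := exists_parent (isT : 1 < n.+2).
rewrite son_index // in n_eq; have lt_m := size_build_gt m.
have /IH [w [code_w inv_w]] : m < n.+2 by lia.
have /IH [u [code_u inv_u]] : m.+1 < n.+2 by lia.
rewrite n_eq.
case: (ltngtP i (nsons p m.+1 - 1)) => [lt_i|gt_i|->].
- by exists (rcons w i.+1); apply: mcode_inv_son_low => //; lia.
- have -> : i = nsons p m.+1 by lia.
  by exists (rcons u 1); apply: mcode_inv_son_last.
- by exists (rcons u 0); apply: mcode_inv_son_black.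
Qed.

Lemma mcode_code_inv n w : is_mcode p n w -> code_inv n w.
Proof.
by move=> code_w; have [v [code_v inv_v]] := exists_mcode_inv n; rewrite (mcode_uniq p_ge4 code_w code_v).
Qed.

Lemma mcode_sons m u w : is_mcode p m.+1 u -> is_mcode p m w ->
  [/\ (signature u == 0) = is_black p m.+1,
      forall h, 1 <= h <= nsons p m.+1 - 2 -> is_mcode p (son p m.+1 h) (rcons w h.+1),
      is_mcode p (son p m.+1 (nsons p m.+1 - 1)) (rcons u 0),
      is_mcode p (son p m.+1 (nsons p m.+1)) (rcons u 1)
    & is_black p (son p m.+1 (nsons p m.+1 - 1))].
Proof.
move=> code_u code_w; have inv_u := mcode_code_inv code_u; have inv_w := mcode_code_inv code_w.
have k_ge2 := nsons_ge2 m.+1.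
split.
- by case: inv_u => _ -> .
- by move=> h h_range; rewrite son_index; [case: (mcode_inv_son_low code_w inv_w h_range) | lia].
- by rewrite son_index; [case: (mcode_inv_son_black code_u inv_u) | lia].
- by rewrite son_index; [case: (mcode_inv_son_last code_u inv_u) | lia].
- by rewrite son_index ?is_black_son ?eqxx //; lia.
Qed.

End MetallicTree.

Theorem lemma5 (p : nat) (hp : 5 <= p) (nu : nat) (hnu : 1 <= nu)
  (u w : seq nat) (hu : is_mcode p nu u) (hw : is_mcode p nu.-1 w) :
  (is_black p nu ->
     [/\ signature u = 0 /\ nsons p nu = p - 3,
         (forall h, 1 <= h <= p - 5 -> is_mcode p (son p nu h) (rcons w h.+1)),
         is_mcode p (son p nu (p - 4)) (rcons u 0),
         is_mcode p (son p nu (p - 3)) (rcons u 1)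
       & is_black p (son p nu (p - 4))])
  /\
  (~~ is_black p nu ->
     [/\ signature u != 0 /\ nsons p nu = p - 2,
         (forall h, 1 <= h <= p - 4 -> is_mcode p (son p nu h) (rcons w h.+1)),
         is_mcode p (son p nu (p - 3)) (rcons u 0),
         is_mcode p (son p nu (p - 2)) (rcons u 1)
       & is_black p (son p nu (p - 3))]).
Proof.
case: nu hnu hu hw => [//|m] _ hu hw.
have [sig_u sons_w son_u0 son_u1 black_son] := mcode_sons hp hu hw.
rewrite nsonsE in sons_w son_u0 son_u1 black_son *.
split=> [black_m|white_m].
- have [e5 e4] : p - 3 - 2 = p - 5 /\ p - 3 - 1 = p - 4 by lia.
  rewrite black_m e5 e4 in sons_w son_u0 son_u1 black_son *.
  by split=> //; split=> //; apply/eqP; rewrite sig_u.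
- have [e4 e3] : p - 2 - 2 = p - 4 /\ p - 2 - 1 = p - 3 by lia.
  rewrite (negbTE white_m) e4 e3 in sons_w son_u0 son_u1 black_son *.
  by split=> //; split=> //; rewrite sig_u.
Qed.
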